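(* Let $k$ be a field, $U$ a three-dimensional $k$-vector space, and $\phi_3\in D_3U^*$. Assume (a) either the characteristic of $k$ is not two, or the characteristic of $k$ is two but $\phi_3\neq x^*y^*z^*$ for every basis $x^*,y^*,z^*$ of $U^*$; and (b) $\ell\phi_3\neq0$ for every nonzero $\ell\in U$. Then $\Gamma_{\phi_3}:D_3U\otimes\bigwedge^3U\to\bigwedge^3U^*$ is not identically zero.
   Context: $U^*=\operatorname{Hom}_k(U,k)$, $D_iU^*=\operatorname{Hom}_k(\operatorname{Sym}_iU,k)$; $D_\bullet U^*$ is the divided power algebra, a module over $\operatorname{Sym}_\bullet U$ via $(uv)(u')=v(uu')$. For a basis $x,y,z$ of $U$ with dual basis $x^*,y^*,z^*$, $x^*y^*z^*$ is the element of $D_3U^*$ taking value $1$ on $xyz$ and $0$ on all other cubic monomials. $D_3U$ is the degree-$3$ divided power of $U$; for $X\in D_3U$, $\Delta(X)\in U^{\otimes3}$ is its comultiplication (for $X=\ell_1^{(e_1)}\cdots\ell_s^{(e_s)}$ with $\sum e_j=3$, the sum of all distinct words $u_1\otimes u_2\otimes u_3$ in which the symbol $\ell_j$ occurs exactly $e_j$ times, extended linearly). $\Gamma_{\phi_3}(X\otimes y_1\wedge y_2\wedge y_3)=\sum(u_1y_1\phi_3)\wedge(u_2y_2\phi_3)\wedge(u_3y_3\phi_3)$, summed over the terms of $\Delta(X)$, with $u_iy_i\in\operatorname{Sym}_2U$ acting on $\phi_3$ to give elements of $U^*$. *)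

(* U := k^3 as row vectors 'rV[k]_3 with standard basis
   e_0 = x, e_1 = y, e_2 = z. *)
From HB Require Import structures.
From mathcomp Require Import all_boot all_order all_algebra.
Set Implicit Arguments. Unset Strict Implicit. Unset Printing Implicit Defensive.
Import Order.TTheory GRing.Theory Num.Theory.
Local Open Scope ring_scope.

(* Exponent of e_m in the cubic monomial e_i e_j e_l (or in the word
   e_i ⊗ e_j ⊗ e_l). *)
Definition cnt (i j l m : 'I_3) : nat := ((i == m) + (j == m) + (l == m))%N.

(* An element of D_3 U^* = Hom(Sym_3 U, k) is given by its values
   phi a b c = phi(x^a y^b z^c) on the cubic monomials (a+b+c = 3; other
   entries are never read).  Similarly an element X of D_3 U is given by its
   coefficients X a b c on the divided-power monomials x^(a) y^(b) z^(c). *)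
Definition DUdual3 (k : fieldType) := nat -> nat -> nat -> k.
Definition DU3 (k : fieldType) := nat -> nat -> nat -> k.

(* phi(u v w) for u v w in U (product in Sym_3 U). *)
Definition eval3 (k : fieldType) (phi : DUdual3 k) (u v w : 'rV[k]_3) : k :=
  \sum_(i < 3) \sum_(j < 3) \sum_(l < 3)
     u 0 i * v 0 j * w 0 l *
     phi (cnt i j l 0) (cnt i j l 1) (cnt i j l 2).

(* l phi in D_2 U^*, given by its values on the quadratic monomials
   x^a y^b z^c (a+b+c = 2): (l phi)(q) = phi(l q). *)
Definition contract1 (k : fieldType) (phi : DUdual3 k) (l : 'rV[k]_3)
  (a b c : nat) : k :=
  l 0 0 * phi a.+1 b c + l 0 1 * phi a b.+1 c + l 0 2 * phi a b c.+1.

(* (u y) phi in U^*, as a row vector of its values on e_0, e_1, e_2. *)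
Definition contract2 (k : fieldType) (phi : DUdual3 k) (u y : 'rV[k]_3)
  : 'rV[k]_3 := \row_m eval3 phi u y (delta_mx 0 m).

(* phi = x^* y^* z^* for the basis x^*,y^*,z^* of U^* given by the rows of
   Bs (invertible): with x, y, z the dual basis of U (rows of (Bs^-1)^T),
   phi takes value 1 on xyz and 0 on every other cubic monomial in x,y,z. *)
Definition is_xyz_star (k : fieldType) (phi : DUdual3 k) (Bs : 'M[k]_3) : Prop :=
  forall i j l : 'I_3,
    eval3 phi (row i (invmx Bs)^T) (row j (invmx Bs)^T) (row l (invmx Bs)^T)
    = if [&& i != j, j != l & i != l] then 1 else 0.

(* Gamma_phi(X ⊗ y1∧y2∧y3), with /\^3 U^* identified with k via the
   determinant: a∧b∧c |-> det[a;b;c].  Delta(X) = sum over words (i,j,l) of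
   X(exponents of the word) e_i⊗e_j⊗e_l. *)
Definition wedge3 (k : fieldType) (a b c : 'rV[k]_3) : k :=
  \det (\matrix_(r < 3, s < 3)
    (if r == 0 :> nat then a 0 s else if r == 1 :> nat then b 0 s else c 0 s)).

Definition Gamma (k : fieldType) (phi : DUdual3 k) (X : DU3 k)
  (y1 y2 y3 : 'rV[k]_3) : k :=
  \sum_(i < 3) \sum_(j < 3) \sum_(l < 3)
     X (cnt i j l 0) (cnt i j l 1) (cnt i j l 2) *
     wedge3 (contract2 phi (delta_mx 0 i) y1)
            (contract2 phi (delta_mx 0 j) y2)
            (contract2 phi (delta_mx 0 l) y3).

(* Suppose Gamma_phi vanishes identically and let M(u) be the Gram matrix of the
   quadric u phi.  Evaluating Gamma_phi on u^(3) and on u^(2) v (against x/\y/\z)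
   gives det M(u) = 0 and tr (adj M(u) M(v)) = 0 for all u, v.  For 3x3 matrices
   adj A N adj A = tr (adj A N) adj A - det A (...), so every row w of an adjugate
   adj M(u) satisfies phi(w w v) = 0 for all v.  Such a nonzero w exists: if all
   adjugates vanish, every M(u) has rank at most one, and a pencil of symmetric
   matrices of rank at most one cannot be injective in u, contradicting (b).
   Taking w as the last basis vector z, the remaining coefficients of phi are
   pinned down by finitely many of the vanishing conditions: either they
   contradict (b), or the characteristic is two and phi is a multiple of x*y*z*,
   contradicting (a) after rescaling x. *)

From HB Require Import structures.
From mathcomp Require Import all_boot all_order all_algebra ring.
From Stdlib Require Import Classical.
Import GRing.Theory.
Set Implicit Arguments. Unset Strict Implicit. Unset Printing Implicit Defensive.
Local Open Scope ring_scope.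

Local Notation "''e_' i" := (delta_mx 0 i : 'rV_3)
  (at level 8, i at level 2, format "''e_' i").

Definition o0 : 'I_3 := @Ordinal 3 0 isT.
Definition o1 : 'I_3 := @Ordinal 3 1 isT.
Definition o2 : 'I_3 := @Ordinal 3 2 isT.

Lemma ord3_ind (P : 'I_3 -> Prop) : P o0 -> P o1 -> P o2 -> forall i, P i.
Proof.
move=> P0 P1 P2 [[|[|[|i]]] lti] //.
- by rewrite (_ : Ordinal lti = o0) //; apply/val_inj.
- by rewrite (_ : Ordinal lti = o1) //; apply/val_inj.
- by rewrite (_ : Ordinal lti = o2) //; apply/val_inj.
Qed.

Lemma big_ord3 (V : nmodType) (F : 'I_3 -> V) : \sum_(i < 3) F i = F o0 + F o1 + F o2.
Proof. by rewrite !big_ord_recr big_ord0 /= add0r; congr (F _ + F _ + F _); apply/val_inj. Qed.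

Lemma ord3_numE : (((2 : 'I_3) = o2) * ((1 : 'I_3) = o1) * ((0 : 'I_3) = o0))%type.
Proof. by do !split; apply/val_inj. Qed.

Lemma neq_ord3_cyclic (i j : 'I_3) : i != j ->
  exists r, (i, j) = (ordS r, ord_pred r) \/ (i, j) = (ord_pred r, ordS r).
Proof.
elim/ord3_ind: i; elim/ord3_ind: j => // _;
  [exists o2; left | exists o1; right | exists o2; right
  | exists o0; left | exists o1; left | exists o0; right];
  by congr pair; apply/val_inj.
Qed.

Section Matrix33.
Variable R : comNzRingType.
Implicit Types A N : 'M[R]_3.

(* Lets [ring] see through the ordinal arithmetic of [lift], [ordS], ... *)
Lemma mx_nat_entries m n (A : 'M[R]_(m.+1, n.+1)) :
  exists f : nat -> nat -> R, forall i j, A i j = f i j.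
Proof. by exists (fun i j => A (inord i) (inord j)) => i j; rewrite !inord_val. Qed.

Lemma det_mx22 (A : 'M[R]_2) : \det A = A 0 0 * A 1 1 - A 0 1 * A 1 0.
Proof.
have [a Ea] := mx_nat_entries A.
rewrite (expand_det_row _ 0) !big_ord_recr big_ord0 /= /cofactor !det_mx11 !mxE !Ea /bump /=.
ring.
Qed.

Lemma det_mx33 A : \det A =
  A o0 o0 * (A o1 o1 * A o2 o2 - A o1 o2 * A o2 o1)
  - A o0 o1 * (A o1 o0 * A o2 o2 - A o1 o2 * A o2 o0)
  + A o0 o2 * (A o1 o0 * A o2 o1 - A o1 o1 * A o2 o0).
Proof.
have [a Ea] := mx_nat_entries A.
by rewrite (expand_det_row _ o0) big_ord3 /cofactor !det_mx22 !mxE !Ea /bump /=; ring.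
Qed.

Lemma adj_mx33 A : \adj A = \matrix_(i, j)
  (A (ordS j) (ordS i) * A (ord_pred j) (ord_pred i)
   - A (ordS j) (ord_pred i) * A (ord_pred j) (ordS i)).
Proof.
have [a Ea] := mx_nat_entries A.
apply/matrixP => i j; elim/ord3_ind: i; elim/ord3_ind: j;
  by rewrite !mxE /cofactor det_mx22 !mxE !Ea /bump /=; ring.
Qed.

(* The adjugate is quadratic on 3x3 matrices, so the last term is its polarization. *)
Lemma adj_mul_adj_mx33 A N :
  \adj A *m N *m \adj A
  = \tr (\adj A *m N) *: \adj A - \det A *: (\adj (A + N) - \adj A - \adj N).
Proof.
have [a Ea] := mx_nat_entries A; have [n En] := mx_nat_entries N.
apply/matrixP => i j; elim/ord3_ind: i; elim/ord3_ind: j;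
  by rewrite /mxtrace det_mx33 !adj_mx33 !(mxE, big_ord3) !Ea !En /=; ring.
Qed.

End Matrix33.

Lemma det_pencil_mx33 (R : comNzRingType) (A N : 'M[R]_3) :
  \det (map_mx polyC A + 'X *: map_mx polyC N) =
  (\det A)%:P + 'X * (\tr (\adj A *m N))%:P
  + 'X^2 * (\tr (\adj N *m A))%:P + 'X^3 * (\det N)%:P.
Proof.
have [a Ea] := mx_nat_entries A; have [n En] := mx_nat_entries N.
rewrite /mxtrace !det_mx33 !adj_mx33 !(mxE, big_ord3) !Ea !En /=.
by rewrite !(polyCD, polyCN, polyCM, polyCB); ring.
Qed.

Lemma coef1_cubic (R : nzRingType) (c0 c1 c2 c3 : R) :
  (c0%:P + 'X * c1%:P + 'X^2 * c2%:P + 'X^3 * c3%:P)`_1 = c1.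
Proof. by rewrite !coefD coefXM !coefXnM !coefC /= add0r !addr0. Qed.

Lemma mxtrace_adj_congr_mx33 (R : comNzRingType) (B A N : 'M[R]_3) :
  \tr (\adj (B *m A *m B^T) *m (B *m N *m B^T)) = \det B ^+ 2 * \tr (\adj A *m N).
Proof.
pose P := @map_mx _ _ (@polyC R) 3 3.
have E : P (B *m A *m B^T) + 'X *: P (B *m N *m B^T) = P B *m (P A + 'X *: P N) *m (P B)^T.
  by rewrite /P !map_mxM map_trmx mulmxDr mulmxDl -scalemxAr -scalemxAl.
move/(congr1 (fun M : 'M[{poly R}]_3 => (\det M)`_1)): E.
rewrite !det_mulmx det_tr !det_pencil_mx33 coef1_cubic /P !det_map_mx coefMC coefCM.
by rewrite coef1_cubic => ->; rewrite mulrC mulrA -expr2.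
Qed.

Lemma mulmx_trmx_entry (R : pzRingType) m n (A : 'M[R]_(m, n)) (M : 'M[R]_n) j l :
  (A *m M *m A^T) j l = (row j A *m M *m (row l A)^T) 0 0.
Proof. by rewrite tr_row colE mulmxA -colE -!row_mul !mxE. Qed.

(** * Matrices of rank at most one *)

Definition minors2_eq0 (R : pzRingType) m n (A : 'M[R]_(m, n)) :=
  forall i j k l, A i k * A j l = A i l * A j k.

Lemma adj_eq0_minors2 (R : comNzRingType) (A : 'M[R]_3) : \adj A = 0 -> minors2_eq0 A.
Proof.
move=> A0 i j k l.
have {}A0 r c : A (ordS r) (ordS c) * A (ord_pred r) (ord_pred c)
              = A (ordS r) (ord_pred c) * A (ord_pred r) (ordS c).
  by apply/eqP; rewrite -subr_eq0; move/matrixP/(_ c r): A0; rewrite adj_mx33 !mxE => ->.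
have [-> | /neq_ord3_cyclic [r [] [-> ->]]] := eqVneq i j; first exact: mulrC.
all: have [-> // | /neq_ord3_cyclic [c [] [-> ->]]] := eqVneq k l.
all: by [rewrite A0 | rewrite -A0 | rewrite mulrC A0 mulrC | rewrite mulrC -A0 mulrC].
Qed.

Section Minors2.
Variables (R : idomainType) (n : nat).
Implicit Types X Y : 'M[R]_n.

Lemma minors2_sym_row0 X j l : X^T = X -> minors2_eq0 X -> X j j = 0 -> X j l = 0.
Proof.
move=> sX mX Xjj; have := mX j l j l; rewrite Xjj mul0r.
have -> : X l j = X j l by rewrite -[in LHS]sX mxE.
by move/esym/eqP; rewrite mulf_eq0 orbb => /eqP.
Qed.

Lemma minors2_addl_eq0 X Y j : X^T = X -> minors2_eq0 X -> minors2_eq0 Y ->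
  minors2_eq0 (X + Y) -> X j j = 0 -> Y j j != 0 -> X = 0.
Proof.
move=> sX mX mY mXY Xjj Yjj; apply/matrixP => k l; rewrite mxE.
have Xj m : X j m = 0 by exact: minors2_sym_row0.
have Xmj m : X m j = 0 by rewrite -sX mxE Xj.
have := mXY j k j l; rewrite !mxE Xjj Xj Xmj !add0r mulrDr mY.
move/(canRL (addrK _)); rewrite subrr => /eqP.
by rewrite mulf_eq0 (negPf Yjj) => /eqP.
Qed.

End Minors2.

Lemma cntC12 i j l m : cnt i j l m = cnt j i l m.
Proof. by rewrite /cnt (addnC (i == m)). Qed.

Lemma cntC23 i j l m : cnt i j l m = cnt i l j m.
Proof. by rewrite /cnt addnAC. Qed.

Section CubicForm.
Variables (k : fieldType) (phi : DUdual3 k).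
Implicit Types u v w : 'rV[k]_3.

(* The Gram matrix of the quadric u phi in D_2 U^*. *)
Definition qmx u : 'M[k]_3 :=
  \matrix_(j, l) \sum_i u 0 i * phi (cnt i j l 0) (cnt i j l 1) (cnt i j l 2).

Fact qmx_is_linear : linear qmx.
Proof.
move=> a u v; apply/matrixP => j l; rewrite !mxE mulr_sumr -big_split /=.
by apply: eq_bigr => i _; rewrite !mxE mulrDl mulrA.
Qed.
HB.instance Definition _ := GRing.isLinear.Build k 'rV[k]_3 'M[k]_3 _ qmx qmx_is_linear.

Lemma qmx_sym u : (qmx u)^T = qmx u.
Proof. by apply/matrixP => j l; rewrite !mxE; apply: eq_bigr => i _; rewrite !(cntC23 i l j). Qed.

Lemma qmx_basis i j l : qmx 'e_i j l = phi (cnt i j l 0) (cnt i j l 1) (cnt i j l 2).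
Proof.
rewrite mxE (bigD1 i) //= big1 ?addr0 => [|m /negPf nim]; first by rewrite mxE !eqxx mul1r.
by rewrite mxE nim andbF mul0r.
Qed.

Lemma eval3_qmx u v w : eval3 phi u v w = (v *m qmx u *m w^T) 0 0.
Proof.
rewrite mxE; under [RHS]eq_bigr => l _ do rewrite !mxE big_distrl /=.
rewrite [RHS]exchange_big /eval3 [LHS]exchange_big; apply: eq_bigr => j _.
rewrite [LHS]exchange_big; apply: eq_bigr => l _; rewrite !mxE mulr_sumr big_distrl.
by apply: eq_bigr => i _ /=; ring.
Qed.

Lemma eval3C12 u v w : eval3 phi u v w = eval3 phi v u w.
Proof.
rewrite /eval3 [LHS]exchange_big; apply: eq_bigr => i _; apply: eq_bigr => j _.
apply: eq_bigr => l _.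
by rewrite [cnt j i l _]cntC12 [cnt j i l _]cntC12 [cnt j i l _]cntC12 (mulrC (u 0 j)).
Qed.

Lemma eval3C23 u v w : eval3 phi u v w = eval3 phi u w v.
Proof.
rewrite !eval3_qmx (_ : w *m qmx u *m v^T = (v *m qmx u *m w^T)^T) ?mxE //.
by rewrite !trmx_mul trmxK qmx_sym mulmxA.
Qed.

Lemma eval3_basis i j l :
  eval3 phi 'e_i 'e_j 'e_l = phi (cnt i j l 0) (cnt i j l 1) (cnt i j l 2).
Proof.
by rewrite eval3_qmx -rowE trmx_delta -colE [col _ _ _ _]mxE [row _ _ _ _]mxE qmx_basis.
Qed.

Lemma eval3Z a b c u v w :
  eval3 phi (a *: u) (b *: v) (c *: w) = a * b * c * eval3 phi u v w.
Proof.
have Zl x y z d : eval3 phi (d *: x) y z = d * eval3 phi x y z.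
  by rewrite !eval3_qmx linearZ /= -scalemxAr -scalemxAl mxE.
have -> : eval3 phi u v w = eval3 phi w v u by rewrite eval3C12 eval3C23 eval3C12.
by rewrite Zl eval3C12 Zl eval3C23 eval3C12 Zl !mulrA.
Qed.

Lemma contract2_qmx u y : contract2 phi u y = y *m qmx u.
Proof. by apply/rowP => m; rewrite mxE eval3_qmx trmx_delta -colE mxE. Qed.

(* phi in the basis of U formed by the rows of B. *)
Definition rebase (B : 'M[k]_3) : DUdual3 k := fun a b c =>
  let t i j l := eval3 phi (row i B) (row j B) (row l B) in
  match a, b, c with
  | 3, 0, 0 => t o0 o0 o0 | 2, 1, 0 => t o0 o0 o1 | 2, 0, 1 => t o0 o0 o2
  | 1, 2, 0 => t o0 o1 o1 | 1, 1, 1 => t o0 o1 o2 | 1, 0, 2 => t o0 o2 o2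
  | 0, 3, 0 => t o1 o1 o1 | 0, 2, 1 => t o1 o1 o2 | 0, 1, 2 => t o1 o2 o2
  | 0, 0, 3 => t o2 o2 o2 | _, _, _ => 0
  end.

Lemma rebase_basis B i j l :
  rebase B (cnt i j l 0) (cnt i j l 1) (cnt i j l 2)
  = eval3 phi (row i B) (row j B) (row l B).
Proof.
elim/ord3_ind: i; elim/ord3_ind: j; elim/ord3_ind: l => /=;
  by [| rewrite eval3C12 | rewrite eval3C23 | rewrite eval3C12 eval3C23
      | rewrite eval3C23 eval3C12 | rewrite eval3C12 eval3C23 eval3C12].
Qed.

End CubicForm.

Section Rebase.
Variables (k : fieldType) (phi : DUdual3 k).
Implicit Types (u v w : 'rV[k]_3) (B C : 'M[k]_3).

Lemma qmx_rebase B u : qmx (rebase phi B) u = B *m qmx phi (u *m B) *m B^T.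
Proof.
apply/matrixP => j l.
rewrite mulmx_sum_row linear_sum mulmx_sumr mulmx_suml summxE [LHS]mxE.
apply: eq_bigr => i _; rewrite rebase_basis eval3_qmx linearZ -scalemxAr -scalemxAl.
by rewrite [RHS]mxE mulmx_trmx_entry.
Qed.

Lemma eval3_rebase B u v w :
  eval3 (rebase phi B) u v w = eval3 phi (u *m B) (v *m B) (w *m B).
Proof. by rewrite !eval3_qmx qmx_rebase trmx_mul !mulmxA. Qed.

Lemma rebaseM B C i j l :
  rebase (rebase phi B) C (cnt i j l 0) (cnt i j l 1) (cnt i j l 2)
  = rebase phi (C *m B) (cnt i j l 0) (cnt i j l 1) (cnt i j l 2).
Proof. by rewrite !rebase_basis eval3_rebase !row_mul. Qed.

End Rebase.

Lemma wedge3_rows (k : fieldType) (A B C : 'M[k]_3) :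
  wedge3 (row o0 A) (row o1 B) (row o2 C) =
  A o0 o0 * (B o1 o1 * C o2 o2 - B o1 o2 * C o2 o1)
  - A o0 o1 * (B o1 o0 * C o2 o2 - B o1 o2 * C o2 o0)
  + A o0 o2 * (B o1 o0 * C o2 o1 - B o1 o1 * C o2 o0).
Proof. by rewrite /wedge3 det_mx33 !mxE. Qed.

Section Gamma.
Variables (k : fieldType) (phi : DUdual3 k).
Implicit Types u v : 'rV[k]_3.

(* The coefficients of the divided powers u^(3) and u^(2) v in D_3 U. *)
Definition dpow3 u : DU3 k := fun a b c => u 0 o0 ^+ a * u 0 o1 ^+ b * u 0 o2 ^+ c.

Definition dpow21 u v : DU3 k := fun a b c =>
  a%:R * v 0 o0 * u 0 o0 ^+ a.-1 * u 0 o1 ^+ b * u 0 o2 ^+ c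
  + b%:R * v 0 o1 * u 0 o0 ^+ a * u 0 o1 ^+ b.-1 * u 0 o2 ^+ c
  + c%:R * v 0 o2 * u 0 o0 ^+ a * u 0 o1 ^+ b * u 0 o2 ^+ c.-1.

Lemma Gamma_dpow3 u : Gamma phi (dpow3 u) 'e_o0 'e_o1 'e_o2 = \det (qmx phi u).
Proof.
rewrite /Gamma !big_ord3 !contract2_qmx -!rowE !wedge3_rows !qmx_basis.
rewrite det_mx33 !mxE !big_ord3 /dpow3 /cnt /= ?(add0n, addn0, add1n, addn1).
ring.
Qed.

Lemma Gamma_dpow21 u v :
  Gamma phi (dpow21 u v) 'e_o0 'e_o1 'e_o2 = \tr (\adj (qmx phi u) *m qmx phi v).
Proof.
rewrite /Gamma !big_ord3 !contract2_qmx -!rowE !wedge3_rows !qmx_basis.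
rewrite /mxtrace adj_mx33 !(mxE, big_ord3) /dpow21 /cnt /= ?(add0n, addn0, add1n, addn1).
ring.
Qed.

End Gamma.

(** * Singular nets and isotropic vectors *)

Section Net.
Variables (k : fieldType) (phi : DUdual3 k).
Implicit Types u v w : 'rV[k]_3.

Definition singular_net :=
  forall u v, \det (qmx phi u) = 0 /\ \tr (\adj (qmx phi u) *m qmx phi v) = 0.

Definition concise := forall u, qmx phi u = 0 -> u = 0.

Definition isotropic w := forall v, eval3 phi w w v = 0.

Lemma concise_contract1 :
  (forall l, l != 0 -> exists a b c, (a + b + c = 2)%N /\ contract1 phi l a b c != 0) ->
  concise.
Proof.
move=> hb l Ml; apply/eqP; apply: contraT => /hb [a [b [c [abc /negP []]]]].
apply/eqP; have M0 j m : qmx phi l j m = 0 by rewrite Ml mxE.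
case: a b c abc => [|[|[|a]]] [|[|[|b]]] [|[|[|c]]] //= _;
  [ rewrite -(M0 o2 o2) | rewrite -(M0 o1 o2) | rewrite -(M0 o1 o1)
  | rewrite -(M0 o0 o2) | rewrite -(M0 o0 o1) | rewrite -(M0 o0 o0) ];
  rewrite mxE big_ord3 /contract1 ord3_numE.1.1 ord3_numE.1.2 ord3_numE.2 /cnt /=;
  by rewrite ?(add0n, addn0, add1n, addn1); ring.
Qed.

End Net.

Section NetRebase.
Variables (k : fieldType) (phi : DUdual3 k) (B : 'M[k]_3).

Lemma singular_net_rebase : singular_net phi -> singular_net (rebase phi B).
Proof.
move=> sing u v; have [det0 tr0] := sing (u *m B) (v *m B).
by rewrite !qmx_rebase mxtrace_adj_congr_mx33 tr0 mulr0 !det_mulmx det0 mulr0 mul0r.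
Qed.

Lemma concise_rebase : B \in unitmx -> concise phi -> concise (rebase phi B).
Proof.
move=> uB conc u; rewrite qmx_rebase => /(congr1 (mulmx (invmx B))).
rewrite !mulmxA mulVmx // mul1mx mulmx0 => /(congr1 (mulmx^~ (invmx B^T))).
rewrite mulmxK ?unitmx_tr // mul0mx => /conc/(congr1 (mulmx^~ (invmx B))).
by rewrite mulmxK // mul0mx.
Qed.

Lemma isotropic_rebase w : isotropic phi (w *m B) -> isotropic (rebase phi B) w.
Proof. by move=> iso v; rewrite eval3_rebase iso. Qed.

End NetRebase.

Section IsotropicVector.
Variables (k : fieldType) (phi : DUdual3 k).
Hypotheses (sing : singular_net phi) (conc : concise phi).

Lemma isotropic_adj_row u i : isotropic phi (row i (\adj (qmx phi u))).
Proof.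
move=> v; set A := \adj (qmx phi u).
have AT : A^T = A by rewrite trmx_adj qmx_sym.
have [det0 tr0] := sing u v.
rewrite eval3C23 eval3C12 eval3_qmx -mulmx_trmx_entry AT adj_mul_adj_mx33 tr0 det0.
by rewrite !scale0r subr0 mxE.
Qed.

(* A nonzero row of an adjugate will do; if there is none, every qmx u has rank
   at most one and a suitable combination l of e0 and e1 has qmx l = 0. *)
Lemma exists_isotropic : exists2 w, w != 0 & isotropic phi w.
Proof.
have [[u [i ri]] | no_adj] := classic (exists u i, row i (\adj (qmx phi u)) != 0).
  by exists (row i (\adj (qmx phi u))); last exact: isotropic_adj_row.
have minors u : minors2_eq0 (qmx phi u).
  apply: adj_eq0_minors2; apply/row_matrixP => i; rewrite row0.
  by apply/eqP; apply: contraT => ri; case: no_adj; exists u, i.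
have [Y defY] : {Y | qmx phi 'e_o0 = Y} by exists (qmx phi 'e_o0).
have /existsP [j Yjj] : [exists j, Y j j != 0].
  apply: contraT => /existsPn Y0.
  suff /conc/rowP/(_ o0)/eqP : qmx phi 'e_o0 = 0 by rewrite !mxE /= oner_eq0.
  apply/matrixP => j l; rewrite [RHS]mxE defY.
  by apply: minors2_sym_row0 _ _ (eqP (negPn (Y0 j))); rewrite -defY ?qmx_sym.
have [M1 defM1] : {M | qmx phi 'e_o1 = M} by exists (qmx phi 'e_o1).
pose l : 'rV_3 := M1 j j *: 'e_o0 - Y j j *: 'e_o1.
have Xjj : qmx phi l j j = 0.
  by rewrite linearB !linearZ /= defY defM1 !mxE mulrN mulrC subrr.
have /conc/rowP/(_ o1) : qmx phi l = 0.
  apply: minors2_addl_eq0 (qmx_sym _ _) (minors l) _ _ Xjj Yjj; rewrite -defY ?qmx_sym //.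
  by rewrite -linearD; apply: minors.
by rewrite !mxE /= mulr0 mulr1 sub0r => /eqP; rewrite oppr_eq0 (negPf Yjj).
Qed.

End IsotropicVector.

(** * Normal forms *)

Definition rows3 (R : nmodType) (r0 r1 r2 : 'rV[R]_3) : 'M[R]_3 :=
  \matrix_(i < 3) [:: r0; r1; r2]`_i.

Definition vec3 (R : nmodType) (a b c : R) : 'rV[R]_3 := \row_(i < 3) [:: a; b; c]`_i.

Lemma multiple_eq0 (R : pzSemiRingType) (c x y : R) : y = 0 -> x = c * y -> x = 0.
Proof. by move=> -> ->; rewrite mulr0. Qed.
Arguments multiple_eq0 {R} c {x y}.

Lemma row2_completion (k : fieldType) (w : 'rV[k]_3) :
  w != 0 -> exists2 B, B \in unitmx & row o2 B = w.
Proof.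
move=> nz_w; have /existsP [i wi] : [exists i, w 0 i != 0].
  by apply: contraNT nz_w => /existsPn w0; apply/eqP/rowP => i; rewrite mxE; apply/eqP/negPn.
exists (rows3 'e_(ordS i) 'e_(ord_pred i) w); last by rewrite rowK.
rewrite unitmxE unitfE (_ : \det _ = w 0 i) //.
by elim/ord3_ind: i {wi}; rewrite det_mx33 !mxE /=; ring.
Qed.

Definition xyz_multiple (k : fieldType) (psi : DUdual3 k) (m : k) :=
  forall i j l, psi (cnt i j l 0) (cnt i j l 1) (cnt i j l 2)
                = if [&& i != j, j != l & i != l] then m else 0.

Section NormalForm.
Variables (k : fieldType) (psi : DUdual3 k).
Hypotheses (sing : singular_net psi) (conc : concise psi) (iso : isotropic psi 'e_o2).

Local Notation c300 := (psi 3 0 0)%N. Local Notation c030 := (psi 0 3 0)%N.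
Local Notation c003 := (psi 0 0 3)%N. Local Notation c210 := (psi 2 1 0)%N.
Local Notation c201 := (psi 2 0 1)%N. Local Notation c120 := (psi 1 2 0)%N.
Local Notation c021 := (psi 0 2 1)%N. Local Notation c102 := (psi 1 0 2)%N.
Local Notation c012 := (psi 0 1 2)%N. Local Notation c111 := (psi 1 1 1)%N.

Local Ltac expand :=
  rewrite /mxtrace ?det_mx33 ?adj_mx33 !(qmx_basis, mxE, big_ord3) /cnt /=
    ?(add0n, addn0, add1n, addn1).

(* Proves [x = 0] from the vanishing condition [cond : lhs = 0], where
   [x = c * lhs] once the coefficients known to vanish ([zeros]) are substituted. *)
Local Ltac net_identity cond c zeros :=
  move: cond; expand; rewrite ?zeros => /(multiple_eq0 c); apply; ring.

Lemma isotropic_coefs : [/\ c003 = 0, c102 = 0 & c012 = 0].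
Proof.
have := iso 'e_o2; have := iso 'e_o1; have := iso 'e_o0.
by rewrite !eval3_basis /cnt /= ?(add0n, addn0, add1n, addn1).
Qed.

Lemma nondegenerate_normal_form : c201 * c021 - c111 ^+ 2 != 0 ->
  [/\ 2%:R = 0 :> k, c111 != 0 & xyz_multiple psi c111].
Proof.
move=> nz_d; have [z003 z102 z012] := isotropic_coefs; have zs := (z003, z102, z012).
have E1 : c201 * (c201 * c021 - c111 ^+ 2) = 0.
  by net_identity (sing 'e_o0 'e_o2).2 (-1 : k) zs.
have E2 : c021 * (c201 * c021 - c111 ^+ 2) = 0.
  by net_identity (sing 'e_o1 'e_o2).2 (-1 : k) zs.
have E3 : (c201 + 2%:R * c111 + c021) * (c201 * c021 - c111 ^+ 2) = 0.
  by net_identity (sing (vec3 1 1 0) 'e_o2).2 (-1 : k) zs.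
have z201 : c201 = 0 by move/eqP: E1; rewrite mulf_eq0 (negPf nz_d) orbF => /eqP.
have z021 : c021 = 0 by move/eqP: E2; rewrite mulf_eq0 (negPf nz_d) orbF => /eqP.
have nz_m : c111 != 0 by apply: contra nz_d; rewrite z201 mul0r sub0r oppr_eq0 expf_eq0.
have two0 : 2%:R = 0 :> k.
  move/eqP: E3; rewrite mulf_eq0 (negPf nz_d) orbF z201 z021 add0r addr0 mulf_eq0.
  by rewrite (negPf nz_m) orbF => /eqP.
have {}zs := (z003, z102, z012, z201, z021).
have nz_mm : c111 ^+ 2 != 0 by rewrite expf_neq0.
have z300 : c300 = 0.
  by apply: (mulfI nz_mm); rewrite mulr0; net_identity (sing 'e_o0 'e_o0).1 (-1 : k) zs.
have z030 : c030 = 0.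
  by apply: (mulfI nz_mm); rewrite mulr0; net_identity (sing 'e_o1 'e_o1).1 (-1 : k) zs.
have z210 : c210 = 0.
  by apply: (mulfI nz_mm); rewrite mulr0; net_identity (sing 'e_o0 'e_o1).2 (1 : k) zs.
have z120 : c120 = 0.
  by apply: (mulfI nz_mm); rewrite mulr0; net_identity (sing 'e_o1 'e_o0).2 (1 : k) zs.
split=> // i j l; elim/ord3_ind: i; elim/ord3_ind: j; elim/ord3_ind: l;
  by rewrite /cnt /= ?(add0n, addn0, add1n, addn1).
Qed.

Lemma reduced_normal_form_absurd : c111 = 0 -> c021 = 0 -> False.
Proof.
move=> z111 z021; have [z003 z102 z012] := isotropic_coefs.
have zs := (z003, z102, z012, z111, z021).
have nz201 : c201 != 0.
  apply/eqP => z201; suff /conc/rowP/(_ o2)/eqP : qmx psi 'e_o2 = 0 by rewrite !mxE oner_eq0.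
  apply/matrixP => j l; rewrite qmx_basis [RHS]mxE.
  by elim/ord3_ind: j; elim/ord3_ind: l; rewrite /cnt /= ?(add0n, addn0, add1n, addn1).
have nz_qq : c201 ^+ 2 != 0 by rewrite expf_neq0.
have z120 : c120 = 0.
  by apply: (mulfI nz_qq); rewrite mulr0; net_identity (sing 'e_o0 'e_o0).1 (-1 : k) zs.
have z030 : c030 = 0.
  by apply: (mulfI nz_qq); rewrite mulr0; net_identity (sing 'e_o0 'e_o1).2 (-1 : k) zs.
suff /conc/rowP/(_ o1)/eqP : qmx psi (vec3 0 c201 (- c210)) = 0.
  by rewrite !mxE (negPf nz201).
apply/matrixP => j l; rewrite [RHS]mxE.
by elim/ord3_ind: j; elim/ord3_ind: l; expand; rewrite ?zs ?z120 ?z030; ring.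
Qed.

(* Replace y by a nonzero vector y' of <x, y> in the kernel of the binary
   quadratic form psi(z, -, -) on <x, y>, which is degenerate. *)
Lemma degenerate_reduction : c201 * c021 - c111 ^+ 2 = 0 ->
  exists2 B, B \in unitmx &
    [/\ isotropic (rebase psi B) 'e_o2, (rebase psi B 1 1 1)%N = 0
      & (rebase psi B 0 2 1)%N = 0].
Proof.
move=> d0; have [z003 z102 z012] := isotropic_coefs.
pose B (r0 r1 : 'rV[k]_3) := rows3 r0 r1 'e_o2.
have iso_B r0 r1 : isotropic (rebase psi (B r0 r1)) 'e_o2.
  by apply: isotropic_rebase; rewrite -rowE rowK.
have unit_B r0 r1 d : \det (B r0 r1) = d -> d != 0 -> B r0 r1 \in unitmx.
  by rewrite unitmxE unitfE => ->.
have coefs r0 r1 : ((rebase psi (B r0 r1) 1 1 1)%N = eval3 psi r0 r1 'e_o2)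
                 * ((rebase psi (B r0 r1) 0 2 1)%N = eval3 psi r1 r1 'e_o2).
  by rewrite /rebase /= !rowK.
have [z111 | nz111] := eqVneq c111 0.
  have [z021 | nz021] := eqVneq c021 0.
    exists (B 'e_o0 'e_o1); last by split; [exact: iso_B | rewrite !coefs !eval3_basis ..].
    by apply: (unit_B _ _ 1); [rewrite det_mx33 !mxE /=; ring | exact: oner_neq0].
  have z201 : c201 = 0.
    by apply: (mulIf nz021); move: d0; rewrite z111 mul0r expr0n subr0.
  exists (B 'e_o1 'e_o0); last by split; [exact: iso_B | rewrite !coefs !eval3_basis ..].
  by apply: (unit_B _ _ (-1)); [rewrite det_mx33 !mxE /=; ring | rewrite oppr_eq0 oner_eq0].
exists (B 'e_o1 (vec3 c111 (- c201) 0)).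
  by apply: (unit_B _ _ (- c111)); [rewrite det_mx33 !mxE /=; ring | rewrite oppr_eq0].
split; first exact: iso_B.
all: rewrite !coefs /eval3 !big_ord3 !mxE /cnt /= ?(add0n, addn0, add1n, addn1) ?z003 ?z102 ?z012.
- by apply: (multiple_eq0 (-1) d0); ring.
- by apply: (multiple_eq0 c201 d0); ring.
Qed.

End NormalForm.

Lemma is_xyz_star_rebase (k : fieldType) (phi : DUdual3 k) (B : 'M[k]_3) :
  xyz_multiple (rebase phi B) 1 -> is_xyz_star phi (invmx B^T).
Proof. by move=> xyz i j l; rewrite invmxK trmxK -rebase_basis xyz. Qed.

Lemma xyz_multiple_normalize (k : fieldType) (psi : DUdual3 k) (m : k) :
  m != 0 -> xyz_multiple psi m -> xyz_multiple (rebase psi (diag_mx (vec3 m^-1 1 1))) 1.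
Proof.
move=> nz_m xyz i j l; rewrite rebase_basis !row_diag_mx eval3Z eval3_basis xyz.
elim/ord3_ind: i; elim/ord3_ind: j; elim/ord3_ind: l; rewrite !mxE /=;
  by rewrite ?(mulr0, mul1r, mulr1, mulVf).
Qed.

Lemma singular_concise_normal_form (k : fieldType) (phi : DUdual3 k) :
  singular_net phi -> concise phi ->
  2%:R = 0 :> k /\ exists2 Bs, Bs \in unitmx & is_xyz_star phi Bs.
Proof.
move=> sing conc.
have [w nz_w iso_w] := exists_isotropic sing conc.
have [B uB rowB] := row2_completion nz_w.
have sing1 := singular_net_rebase B sing; have conc1 := concise_rebase uB conc.
have iso1 : isotropic (rebase phi B) 'e_o2 by apply: isotropic_rebase; rewrite -rowE rowB.
set psi := rebase phi B in sing1 conc1 iso1 *.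
have [d0 | nz_d] := eqVneq ((psi 2 0 1)%N * (psi 0 2 1)%N - (psi 1 1 1)%N ^+ 2) 0.
  have [C uC [isoC m0 s0]] := degenerate_reduction iso1 d0.
  have := reduced_normal_form_absurd (singular_net_rebase C sing1) (concise_rebase uC conc1).
  by move/(_ isoC m0 s0).
have [two0 nz_m xyz] := nondegenerate_normal_form sing1 iso1 nz_d.
split=> //; pose D := diag_mx (vec3 (psi 1 1 1)%N^-1 1 1).
have uD : D \in unitmx.
  by rewrite unitmxE unitfE det_diag !big_ord_recr big_ord0 !mxE /= !(mul1r, mulr1) invr_eq0.
exists (invmx (D *m B)^T); first by rewrite unitmx_inv unitmx_tr unitmx_mul uD uB.
by apply: is_xyz_star_rebase => i j l; rewrite -rebaseM; exact: xyz_multiple_normalize.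
Qed.

Unset Implicit Arguments.

Theorem lemma8p2 (k : fieldType) (phi : DUdual3 k) :
  (2 \notin [pchar k] \/
   (2 \in [pchar k] /\ forall Bs : 'M[k]_3, Bs \in unitmx -> ~ is_xyz_star phi Bs)) ->
  (forall l : 'rV[k]_3, l != 0 ->
     exists a b c : nat, (a + b + c = 2)%N /\ contract1 phi l a b c != 0) ->
  exists (X : DU3 k) (y1 y2 y3 : 'rV[k]_3), Gamma phi X y1 y2 y3 != 0.
Proof.
move=> hchar hconc; apply: NNPP => no_Gamma.
have Gamma0 X y1 y2 y3 : Gamma phi X y1 y2 y3 = 0.
  by apply/eqP/negPn/negP => nz; apply: no_Gamma; exists X, y1, y2, y3.
have sing : singular_net phi.
  by move=> u v; rewrite -Gamma_dpow3 -Gamma_dpow21 !Gamma0.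
have [two0 [Bs uBs xyz]] := singular_concise_normal_form sing (concise_contract1 hconc).
case: hchar => [/negP[] | [_ /(_ Bs uBs)]] //.
by rewrite inE /= two0 eqxx.
Qed.
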